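(* Let $x_1,\dots,x_N\in\mathbb{R}^q$ and let $d:\mathbb{R}^q\times\mathbb{R}^q\to\mathbb{R}_{\ge0}$ be any function such that for every subset $J\subseteq\{1,\dots,N\}$ the function $x\mapsto\sum_{i\in J}d(x,x_i)$ attains its minimum on $\mathbb{R}^q$ (for $J=\emptyset$ this is the zero function). Let $\mu$ be a choice function assigning to each subset $J\subseteq\{1,\dots,N\}$ a fixed point $\mu(J)\in\operatorname{argmin}_{x}\sum_{i\in J}d(x,x_i)$. Let $\hat x_0\in\mathbb{R}^q$ be arbitrary and define recursively $$C_n=\{i\in\{1,\dots,N\}: d(\hat x_n,x_i)<1\},\qquad \hat x_{n+1}=\mu(C_n).$$ Then the sequence $(\hat x_n)$ is stationary: there exists $n_0$ such that $\hat x_n=\hat x_{n_0}$ for all $n\ge n_0$.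
   Context: This is generalized mean shift with the triangular profile $k(u)=\max(1-u,0)$, whose weight function is $g(u)=1$ if $u<1$ and $g(u)=0$ if $u\ge1$. The associated objective is $f(x)=\sum_{i=1}^N\max(1-d(x,x_i),0)=\sum_{i:\,d(x,x_i)<1}(1-d(x,x_i))$. *)

(* R^q is rendered as row vectors 'rV[R]_q over an arbitrary
   real field R (the statement is purely order-theoretic/combinatorial). *)
From HB Require Import structures.
From mathcomp Require Import all_boot all_order all_algebra.
Set Implicit Arguments. Unset Strict Implicit. Unset Printing Implicit Defensive.
Import Order.TTheory GRing.Theory Num.Theory.
Local Open Scope ring_scope.

Definition nbhd (R : realFieldType) (q N : nat)
  (d : 'rV[R]_q -> 'rV[R]_q -> R) (X : 'I_N -> 'rV[R]_q) (x : 'rV[R]_q)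
  : {set 'I_N} := [set i | d x (X i) < 1].

Fixpoint ms_iter (R : realFieldType) (q N : nat)
  (d : 'rV[R]_q -> 'rV[R]_q -> R) (X : 'I_N -> 'rV[R]_q)
  (mu : {set 'I_N} -> 'rV[R]_q) (x0 : 'rV[R]_q) (n : nat) : 'rV[R]_q :=
  match n with
  | 0%N => x0
  | n'.+1 => mu (nbhd d X (ms_iter d X mu x0 n'))
  end.

From mathcomp Require Import all_boot all_order all_algebra.
Set Implicit Arguments. Unset Strict Implicit.
Import Order.TTheory GRing.Theory Num.Theory.
Local Open Scope ring_scope.

(* Mean shift is an ascent method for f(y) = sum_(i in C(y)) (1 - d(y, x_i)),
   where C(y) = {i | d(y, x_i) < 1}: since mu(C(y)) minimises the sum of the
   distances over C(y), f does not decrease along the iterates, and if it stalls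
   then the neighbourhood can only shrink.  Hence the pair (f, C) strictly
   increases (lexicographically, with C ordered by reverse inclusion) until the
   neighbourhood becomes stationary.  The neighbourhoods follow the iteration of
   a self-map of the finite set of subsets of {1, ..., N}, so they loop back,
   which a strict order forbids; once C_n is stationary, so is x_n = mu(C_(n-1)). *)

Lemma iter_reaches_fixpoint (S : finType) (T : S -> S) (lt : rel S) :
  irreflexive lt -> transitive lt ->
  (forall s, T (T s) != T s -> lt s (T s)) ->
  forall s, exists n, T (iter n T s) = iter n T s.
Proof.
move=> lt_irr lt_tr lt_step s.
have /trajectP[m lt_m_ord loop] := looping_order T s.
set n := fingraph.order T s in lt_m_ord loop.
have [/existsP[k /eqP fixk] | /existsPn nofix] :=
  boolP [exists k : 'I_n, T (iter k.+1 T s) == iter k.+1 T s].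
  by exists k.+1.
have incr : {in [pred i | (i <= n)%N] &,
    {homo (fun i => iter i T s) : i j / (i < j)%N >-> lt i j}}.
  apply: homo_ltn_in lt_tr _ _ => [i j _ le_jn k /andP[_ lt_kj] | i _ lt_in].
    by rewrite inE (leq_trans (ltnW lt_kj)).
  by apply: lt_step; exact: nofix (Ordinal lt_in).
have := incr m n (ltnW lt_m_ord) (leqnn n) lt_m_ord.
by rewrite loop lt_irr.
Qed.

Section GeneralizedMeanShift.

Variables (R : realFieldType) (q N : nat) (X : 'I_N -> 'rV[R]_q)
  (d : 'rV[R]_q -> 'rV[R]_q -> R) (mu : {set 'I_N} -> 'rV[R]_q).
Hypothesis mu_argmin : forall (J : {set 'I_N}) (x : 'rV[R]_q),
  \sum_(i in J) d (mu J) (X i) <= \sum_(i in J) d x (X i).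

Local Notation C := (nbhd d X).

Definition ms_objective (y : 'rV[R]_q) : R := \sum_(i in C y) (1 - d y (X i)).

Definition ms_step (J : {set 'I_N}) : {set 'I_N} := C (mu J).

Lemma ms_objective_le_overlap y (z := mu (C y)) :
  ms_objective y <= \sum_(i in C y :&: C z) (1 - d z (X i)).
Proof.
have le_yz : ms_objective y <= \sum_(i in C y) (1 - d z (X i)).
  by rewrite /ms_objective !sumrB lerD2l lerN2 mu_argmin.
apply: le_trans le_yz _; rewrite (big_setID (C z)) /= gerDl.
by apply: sumr_le0 => i; rewrite !inE => /andP[/negbTE nCi _]; rewrite subr_le0 leNgt nCi.
Qed.

Lemma ms_objective_split y (z := mu (C y)) :
  ms_objective z = \sum_(i in C y :&: C z) (1 - d z (X i))
                   + \sum_(i in C z :\: C y) (1 - d z (X i)).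
Proof. by rewrite /ms_objective (big_setID (C y)) setIC. Qed.

Lemma ms_objective_ascent y : ms_objective y <= ms_objective (mu (C y)).
Proof.
apply: le_trans (ms_objective_le_overlap y) _; rewrite ms_objective_split lerDl.
by apply: sumr_ge0 => i; rewrite !inE => /andP[_ Czi]; rewrite subr_ge0 ltW.
Qed.

Lemma ms_stall_nbhd_sub y :
  ms_objective (mu (C y)) <= ms_objective y -> C (mu (C y)) \subset C y.
Proof.
move=> stall; apply/subsetP => i Czi; apply: contraLR stall => nCyi.
rewrite -ltNge (le_lt_trans (ms_objective_le_overlap y)) // ms_objective_split ltrDl.
rewrite (bigD1 i) /=; last by rewrite in_setD nCyi.
apply: ltr_pwDl; first by move: Czi; rewrite inE subr_gt0.
by apply: sumr_ge0 => j; rewrite !inE => /andP[/andP[_ Czj] _]; rewrite subr_ge0 ltW.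
Qed.

Definition ms_potential (J : {set 'I_N}) : R := ms_objective (mu J).

Definition ms_prec (A B : {set 'I_N}) : bool :=
  (ms_potential A < ms_potential B)
  || (ms_potential A == ms_potential B) && (ms_step B \proper ms_step A).

Lemma ms_prec_irr : irreflexive ms_prec.
Proof. by move=> A; rewrite /ms_prec ltxx properxx andbF. Qed.

Lemma ms_prec_trans : transitive ms_prec.
Proof.
move=> B A D /orP[ltAB | /andP[/eqP eqAB pBA]] /orP[ltBD | /andP[/eqP eqBD pDB]].
- by rewrite /ms_prec (lt_trans ltAB ltBD).
- by rewrite /ms_prec -eqBD ltAB.
- by rewrite /ms_prec eqAB ltBD.
- by rewrite /ms_prec eqAB eqBD eqxx (proper_trans pDB pBA) orbT.
Qed.

Lemma ms_prec_step A : ms_step (ms_step A) != ms_step A -> ms_prec A (ms_step A).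
Proof.
move=> notfix; rewrite /ms_prec; have [//|le_stepA] := ltP.
have asc : ms_potential A <= ms_potential (ms_step A) by apply: ms_objective_ascent.
rewrite eq_le asc le_stepA properEneq notfix.
exact: ms_stall_nbhd_sub.
Qed.

Lemma nbhd_ms_iter x0 n : C (ms_iter d X mu x0 n) = iter n ms_step (C x0).
Proof. by elim: n => //= n ->. Qed.

Lemma ms_iter_stationary x0 n :
  ms_step (iter n ms_step (C x0)) = iter n ms_step (C x0) ->
  forall m, (n < m)%N -> ms_iter d X mu x0 m = ms_iter d X mu x0 n.+1.
Proof.
move=> fix_n [//|m]; rewrite ltnS => le_nm /=; rewrite !nbhd_ms_iter.
by rewrite -(subnK le_nm) iterD iter_fix.
Qed.

End GeneralizedMeanShift.

Theorem theorem1 (R : realFieldType) (q N : nat)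
  (X : 'I_N -> 'rV[R]_q)
  (d : 'rV[R]_q -> 'rV[R]_q -> R)
  (d_nonneg : forall x y, 0 <= d x y)
  (d_attain : forall J : {set 'I_N}, exists m : 'rV[R]_q,
      forall x : 'rV[R]_q, \sum_(i in J) d m (X i) <= \sum_(i in J) d x (X i))
  (mu : {set 'I_N} -> 'rV[R]_q)
  (mu_argmin : forall (J : {set 'I_N}) (x : 'rV[R]_q),
      \sum_(i in J) d (mu J) (X i) <= \sum_(i in J) d x (X i))
  (x0 : 'rV[R]_q) :
  exists n0 : nat, forall n : nat, (n0 <= n)%N ->
    ms_iter d X mu x0 n = ms_iter d X mu x0 n0.
Proof.
have [n fix_n] := iter_reaches_fixpoint (@ms_prec_irr _ _ _ X d mu)
  (@ms_prec_trans _ _ _ X d mu) (ms_prec_step mu_argmin) (nbhd d X x0).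
by exists n.+1; exact: ms_iter_stationary fix_n.
Qed.
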